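(* The graph ${\rm SR}(m,n)$ is not determined by its spectrum (that is, there is a graph not isomorphic to ${\rm SR}(m,n)$ whose adjacency matrix has the same spectrum) when (a) $m=4$ and $n\ge 3$, or (b) $n=3$ and $m\ge 4$.
   Context: ${\rm SR}(m,n)$ is the graph whose vertices are the vectors in $\{0,1,2,\dots\}^m$ with coordinate sum $n$, two vertices being adjacent when they differ in precisely two coordinate positions. *)

From HB Require Import structures.
From mathcomp Require Import all_boot all_order all_algebra.
Set Implicit Arguments. Unset Strict Implicit. Unset Printing Implicit Defensive.
Import GRing.Theory.

(* Vertices of SR(m,n): vectors in {0,1,2,...}^m with coordinate sum n.
   Each coordinate is necessarily <= n, so we encode a vertex as a finite
   function 'I_m -> 'I_n.+1 whose coordinate sum is n. *)
Definition sr_vertex_pred (m n : nat) (f : {ffun 'I_m -> 'I_n.+1}) : bool :=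
  (\sum_(i < m) (f i : nat))%N == n.

Definition SRV (m n : nat) : finType :=
  {f : {ffun 'I_m -> 'I_n.+1} | @sr_vertex_pred m n f}.

Definition sr_adj (m n : nat) : rel (SRV m n) :=
  fun u v => #|[set i : 'I_m | val u i != val v i]| == 2.

Definition adj_mx (T : finType) (e : rel T) : 'M[int]_#|T| :=
  \matrix_(i, j) ((e (enum_val i) (enum_val j))%:R)%R.

(* Two graphs have the same spectrum iff their adjacency matrices have the
   same characteristic polynomial (eigenvalues with multiplicities). *)
Definition cospectral (T1 T2 : finType) (e1 : rel T1) (e2 : rel T2) : Prop :=
  char_poly (adj_mx e1) = char_poly (adj_mx e2).

Definition simple_graph (T : finType) (e : rel T) : Prop :=
  symmetric e /\ irreflexive e.

Definition graph_iso (T1 T2 : finType) (e1 : rel T1) (e2 : rel T2) : Prop :=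
  exists f : T1 -> T2, bijective f /\ forall x y, e2 (f x) (f y) = e1 x y.

(* Godsil-McKay switching: let [C] be a 4-clique of a graph such that every vertex outside [C]
   has 0, 2 or 4 neighbours in [C]; toggling the adjacencies between [C] and the outside vertices
   with exactly 2 neighbours in [C] yields a cospectral graph, because the involution [Q] that is
   [(1/2) J - I] on [C] and the identity elsewhere satisfies [A' Q = Q A].
   In SR(m,n), two distinct non-adjacent vertices with two adjacent common neighbours always have
   a third common neighbour, and this property is invariant under isomorphism. Switching with
   respect to the clique {n e_i} of SR(4,n), resp. {k e_0 + (3 - k) e_1} of SR(m,3), satisfies
   the condition and produces two non-adjacent vertices whose only common neighbours are two
   adjacent ones: n e_3 and e_1 + e_2 + (n - 2) e_3, resp. 3 e_0 and e_0 + e_2 + e_3. *)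

From HB Require Import structures.
From mathcomp Require Import all_boot all_order all_algebra.
From mathcomp Require Import ring zify.
Set Implicit Arguments. Unset Strict Implicit. Unset Printing Implicit Defensive.
Import GRing.Theory Num.Theory.
Local Open Scope ring_scope.

Lemma char_poly_similar (F : fieldType) n (A B P : 'M[F]_n) :
  P \in unitmx -> A *m P = P *m B -> char_poly A = char_poly B.
Proof.
move=> P_unit AP_PB; set Px := map_mx polyC P.
have char_conj : char_poly_mx A *m Px = Px *m char_poly_mx B.
  by rewrite /char_poly_mx mulmxBl mulmxBr -!map_mxM AP_PB scalar_mxC.
have detPx_neq0 : \det Px != 0.
  by rewrite det_map_mx polyC_eq0 -unitfE -unitmxE.
move/(congr1 determinant): char_conj; rewrite !det_mulmx mulrC.
exact: mulfI.
Qed.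

Lemma char_poly_map_inj (R S : comNzRingType) (f : {rmorphism R -> S}) n (A B : 'M[R]_n) :
  injective f -> char_poly (map_mx f A) = char_poly (map_mx f B) ->
  char_poly A = char_poly B.
Proof.
move=> f_inj; rewrite -!map_char_poly; apply: map_inj_poly => //; exact: rmorph0.
Qed.

Definition diamond_extensible (T : finType) (e : rel T) : Prop :=
  forall x y z1 z2, x != y -> ~~ e x y -> e x z1 -> e y z1 -> e x z2 -> e y z2 -> e z1 z2 ->
  exists w, [/\ e x w, e y w, w != z1 & w != z2].

Lemma diamond_extensible_iso (T1 T2 : finType) (e1 : rel T1) (e2 : rel T2) :
  graph_iso e1 e2 -> diamond_extensible e2 -> diamond_extensible e1.
Proof.
case=> f [[g fK gK] f_hom] ext2 x y z1 z2 xy nxy xz1 yz1 xz2 yz2 z12.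
have f_inj : injective f := can_inj fK.
have [|||||||w [xw yw wz1 wz2]] := ext2 (f x) (f y) (f z1) (f z2);
  rewrite ?f_hom ?(inj_eq f_inj) //.
exists (g w); rewrite -!f_hom !gK; split => //.
- by apply: contra_neq wz1 => <-.
- by apply: contra_neq wz2 => <-.
Qed.

Section GodsilMcKay.
Variables (T : finType) (e : rel T) (C : {set T}).
Hypotheses (e_sym : symmetric e) (e_irr : irreflexive e).
Hypotheses (card_C : #|C| = 4%N) (C_clique : {in C &, forall s t, s != t -> e s t}).

Definition nbrs_in (w : T) : nat := #|[set t in C | e w t]|.

Hypothesis gm_condition : forall w, w \notin C -> nbrs_in w \in [:: 0; 2; 4]%N.

Definition gm_switch : rel T := fun u v =>
  if u \in C then (if v \in C then e u v else e u v (+) (nbrs_in v == 2))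
  else if v \in C then e u v (+) (nbrs_in u == 2) else e u v.

Lemma gm_switch_simple : simple_graph gm_switch.
Proof.
split=> [u v|u]; rewrite /gm_switch; last by case: (u \in C); rewrite e_irr.
by case: (u \in C); case: (v \in C); rewrite e_sym.
Qed.

Lemma gm_switch_out u v : u \notin C -> v \notin C -> gm_switch u v = e u v.
Proof. by rewrite /gm_switch => /negbTE-> /negbTE->. Qed.

Lemma gm_switch_in_out u v : u \in C -> v \notin C -> gm_switch u v = e u v (+) (nbrs_in v == 2).
Proof. by rewrite /gm_switch => -> /negbTE->. Qed.

Lemma gm_switch_out_in u v : u \notin C -> v \in C -> gm_switch u v = e u v (+) (nbrs_in u == 2).
Proof. by rewrite /gm_switch => /negbTE-> ->. Qed.

Lemma gm_switch_sym : symmetric gm_switch.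
Proof. by case: gm_switch_simple. Qed.

Lemma nbrs_in_gm_switch u : #|[set t in C | gm_switch u t]| = nbrs_in u.
Proof.
have [uC | uNC] := boolP (u \in C).
  by apply: eq_card => t; rewrite !inE /gm_switch uC; case: (t \in C).
have [nb2 | nbN2] := eqVneq (nbrs_in u) 2%N; last first.
  by apply: eq_card => t; rewrite !inE /gm_switch (negbTE uNC) (negbTE nbN2) addbF; case: (t \in C).
have -> : [set t in C | gm_switch u t] = C :\: [set t in C | e u t].
  apply/setP => t; rewrite !inE /gm_switch (negbTE uNC) nb2 eqxx addbT.
  by case: (t \in C); rewrite /= ?andbT.
have sub : [set t in C | e u t] \subset C by apply/subsetP => t; rewrite inE => /andP[].
by rewrite cardsD (setIidPr sub) card_C -/(nbrs_in u) nb2.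
Qed.

Lemma nbrs_in_in u : u \in C -> nbrs_in u = 3%N.
Proof.
move=> uC; rewrite /nbrs_in.
have -> : [set t in C | e u t] = C :\ u.
  apply/setP => t; rewrite !inE; case: (eqVneq t u) => [->|tu]; first by rewrite e_irr andbF.
  by case: (boolP (t \in C)) => tC //=; rewrite C_clique // eq_sym.
by have := cardsD1 u C; rewrite uC card_C => -[].
Qed.

Lemma gm_switch_out_in_balance u w : u \notin C -> w \in C ->
  2^-1 * (nbrs_in u)%:R - (gm_switch u w)%:R = (e u w)%:R :> rat.
Proof.
move=> uNC wC; rewrite /gm_switch (negbTE uNC) wC.
have := gm_condition uNC; rewrite !inE => /or3P[] /eqP nb; rewrite nb /=.
- have /eqP/setP/(_ w) : [set t in C | e u t] == set0 by rewrite -cards_eq0 -/(nbrs_in u) nb.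
  by rewrite !inE wC /= => ->; rewrite mulr0 subr0.
- by rewrite mulVf //; case: (e u w); rewrite ?subrr ?subr0.
- have /eqP/setP/(_ w) : [set t in C | e u t] == C.
    rewrite eqEcard card_C -/(nbrs_in u) nb leqnn andbT.
    by apply/subsetP => t; rewrite inE => /andP[].
  by rewrite !inE wC /= => ->; rewrite addbF (_ : 4%:R = 2 * 2) ?mulKf // -natrM.
Qed.

Definition gm_entry (t w : T) : rat :=
  if (t \in C) && (w \in C) then 2^-1 - (t == w)%:R else (t == w)%:R.

Lemma gm_entryC t w : gm_entry t w = gm_entry w t.
Proof. by rewrite /gm_entry andbC eq_sym. Qed.

Lemma sum_mul_gm_entry (F : T -> rat) w :
  \sum_t F t * gm_entry t w = if w \in C then 2^-1 * \sum_(t in C) F t - F w else F w.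
Proof.
have sum_delta : \sum_t F t * (t == w)%:R = F w.
  by rewrite (bigD1 w) //= eqxx mulr1 big1 ?addr0 // => t /negbTE ->; rewrite mulr0.
case: ifP => wC; last first.
  by rewrite -[RHS]sum_delta; apply: eq_bigr => t _; rewrite /gm_entry wC andbF.
have entry t : gm_entry t w = 2^-1 * (t \in C)%:R - (t == w)%:R.
  rewrite /gm_entry wC andbT; case: ifP => tC; first by rewrite mulr1.
  by rewrite (_ : t == w = false) ?mulr0 ?subr0 //; apply: contraFF tC => /eqP ->.
under eq_bigr do rewrite entry mulrBr mulrCA.
rewrite sumrB sum_delta -mulr_sumr; congr (2^-1 * _ - _); rewrite [RHS]big_mkcond /=.
by apply: eq_bigr => t _; case: (t \in C); rewrite ?mulr1 ?mulr0.
Qed.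

Lemma sum_in_natr (P : pred T) : \sum_(t in C) (P t)%:R = #|[set t in C | P t]|%:R :> rat.
Proof.
rewrite -sum1dep_card natr_sum big_mkcondr /=.
by apply: eq_bigr => t _; case: (P t).
Qed.

Lemma gm_switch_mul_entry u w :
  \sum_t (gm_switch u t)%:R * gm_entry t w = \sum_t gm_entry u t * (e t w)%:R.
Proof.
under [RHS]eq_bigr do rewrite gm_entryC e_sym mulrC.
rewrite !sum_mul_gm_entry !sum_in_natr nbrs_in_gm_switch -/(nbrs_in w).
have [uC|uNC] := boolP (u \in C); have [wC|wNC] := boolP (w \in C).
- by rewrite !nbrs_in_in // /gm_switch uC wC e_sym.
- by rewrite -(gm_switch_out_in_balance wNC uC) opprB addrC subrK gm_switch_sym.
- by rewrite gm_switch_out_in_balance // e_sym.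
- by rewrite /gm_switch (negbTE uNC) (negbTE wNC) e_sym.
Qed.

Lemma gm_entry_involutive u w : \sum_t gm_entry u t * gm_entry t w = (u == w)%:R.
Proof.
rewrite sum_mul_gm_entry; case: ifP => wC; last by rewrite /gm_entry wC andbF.
have [uC|uNC] := boolP (u \in C); last first.
  have uNeq t : t \in C -> (u == t) = false by move=> tC; apply: contraNF uNC => /eqP ->.
  rewrite /gm_entry (negbTE uNC) /= uNeq // big1 => [|t tC]; last by rewrite uNeq.
  by rewrite mulr0 subrr.
have -> : \sum_(t in C) gm_entry u t = 1.
  rewrite (eq_bigr (fun t => 2^-1 - (u == t)%:R)) => [|t tC]; last by rewrite /gm_entry uC tC.
  rewrite sumrB sumr_const card_C sum_in_natr.
  have -> : [set t in C | u == t] = [set u].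
    by apply/setP => t; rewrite !inE eq_sym andb_idl // => /eqP ->.
  by rewrite cards1 -mulr_natr; field.
by rewrite /gm_entry uC wC mulr1 opprB addrC subrK.
Qed.

Definition gm_mx : 'M[rat]_#|T| := \matrix_(i, j) gm_entry (enum_val i) (enum_val j).

Lemma sum_enum_val (F : T -> rat) : \sum_(k < #|T|) F (enum_val k) = \sum_t F t.
Proof. by rewrite -big_enum_val. Qed.

Lemma gm_mx_intertwines :
  map_mx intr (adj_mx gm_switch) *m gm_mx = gm_mx *m map_mx intr (adj_mx e).
Proof.
apply/matrixP => i j; rewrite !mxE.
under eq_bigr do rewrite !mxE rmorph_nat.
under [RHS]eq_bigr do rewrite !mxE rmorph_nat.
rewrite (sum_enum_val (fun t => (gm_switch _ t)%:R * gm_entry t _)).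
rewrite (sum_enum_val (fun t => gm_entry _ t * (e t _)%:R)).
exact: gm_switch_mul_entry.
Qed.

Lemma gm_mx_involutive : gm_mx *m gm_mx = 1%:M.
Proof.
apply/matrixP => i j; rewrite !mxE.
under eq_bigr do rewrite !mxE.
rewrite (sum_enum_val (fun t => gm_entry _ t * gm_entry t _)) gm_entry_involutive.
by rewrite (inj_eq enum_val_inj).
Qed.

Lemma gm_switch_cospectral : cospectral gm_switch e.
Proof.
apply: (char_poly_map_inj (f := intr) intr_inj).
apply: (char_poly_similar _ gm_mx_intertwines).
by case: (mulmx1_unit gm_mx_involutive).
Qed.

End GodsilMcKay.

Local Close Scope ring_scope.

Lemma cospectral_mate_of_switching (T : finType) (e : rel T) (C : {set T}) :
  symmetric e -> irreflexive e -> #|C| = 4%N -> {in C &, forall s t, s != t -> e s t} ->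
  (forall w, w \notin C -> nbrs_in e C w \in [:: 0; 2; 4]%N) ->
  diamond_extensible e -> ~ diamond_extensible (gm_switch e C) ->
  exists (T' : finType) (e' : rel T'), simple_graph e' /\ cospectral e' e /\ ~ graph_iso e' e.
Proof.
move=> e_sym e_irr card_C C_clique nbrs_out ext_e next_sw.
exists T, (gm_switch e C); split; first exact: gm_switch_simple.
split; first exact: gm_switch_cospectral.
by move=> iso; apply: next_sw; apply: diamond_extensible_iso iso ext_e.
Qed.

Lemma neq_sym (T : eqType) (x y : T) : x != y -> y != x.
Proof. by rewrite eq_sym. Qed.

Lemma sum_split2 (I : finType) (f : I -> nat) a b : a != b ->
  \sum_i f i = f a + f b + \sum_(i | (i != a) && (i != b)) f i.
Proof.
move=> ab; rewrite (bigD1 a) //= (bigD1 b) /=; last by rewrite eq_sym.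
by rewrite addnA; congr (_ + _); apply: eq_bigl => i; rewrite andbC.
Qed.

Lemma sum_split3 (I : finType) (f : I -> nat) a b c : a != b -> a != c -> b != c ->
  \sum_i f i = f a + f b + f c + \sum_(i | [&& i != a, i != b & i != c]) f i.
Proof.
move=> ab ac bc; rewrite (sum_split2 f ab) (bigD1 c) /=; last by rewrite !(eq_sym c) ac bc.
by rewrite addnA; congr (_ + _); apply: eq_bigl => i; rewrite andbA.
Qed.

Lemma exists_pos_summand (I : finType) (P : pred I) (f : I -> nat) :
  0 < \sum_(i | P i) f i -> exists2 i, P i & 0 < f i.
Proof.
rewrite lt0n sum_nat_eq0 => /forallPn[i]; rewrite negb_imply -lt0n => /andP[Pi fi].
by exists i.
Qed.

Section SRVertices.
Variables m n : nat.
Local Notation V := (SRV m n).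
Local Notation adj := (@sr_adj m n).

Definition coord (v : V) (i : 'I_m) : nat := val (val v i).

Lemma sum_coord (v : V) : \sum_i coord v i = n.
Proof. exact/eqP/(valP v). Qed.

Lemma coord_inj (u v : V) : coord u =1 coord v -> u = v.
Proof. by move=> uv; apply/val_inj/ffunP => i; apply/val_inj/uv. Qed.

Section Construction.
Variables (f : 'I_m -> nat) (f_sum : \sum_i f i = n).

Lemma sr_vertex_subproof i : f i < n.+1.
Proof. by rewrite ltnS -f_sum (bigD1 i) //= leq_addr. Qed.

Lemma sr_vertex_pred_subproof : sr_vertex_pred [ffun i => Ordinal (sr_vertex_subproof i)].
Proof. by apply/eqP; rewrite -[RHS]f_sum; apply: eq_bigr => i _; rewrite ffunE. Qed.

Definition sr_vertex : V := exist (@sr_vertex_pred m n) _ sr_vertex_pred_subproof.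

Lemma coord_sr_vertex i : coord sr_vertex i = f i.
Proof. by rewrite /coord /= ffunE. Qed.

End Construction.

Lemma neq_coord (x y : V) i : coord x i != coord y i -> x != y.
Proof. by apply: contraNneq => ->. Qed.

Lemma sr_adjE (u v : V) : adj u v = (#|[set i | coord u i != coord v i]| == 2).
Proof. by []. Qed.

Lemma sr_adjP (u v : V) :
  adj u v <-> exists a b, [/\ a != b, coord u a != coord v a, coord u b != coord v b &
                               forall i, i != a -> i != b -> coord u i = coord v i].
Proof.
rewrite sr_adjE; split.
  case/cards2P => a [b [ab /setP diff]]; exists a, b; split => //.
  - by have := diff a; rewrite !inE eqxx.
  - by have := diff b; rewrite !inE eqxx orbT.
  by move=> i ia ib; have := diff i; rewrite !inE (negbTE ia) (negbTE ib) => /negbFE/eqP.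
case=> a [b [ab ha hb ho]]; apply/cards2P; exists a, b; split => //.
apply/setP => i; rewrite !inE.
case: (eqVneq i a) => [->|ia]; first by rewrite ha.
case: (eqVneq i b) => [->|ib]; first by rewrite hb.
by rewrite ho ?eqxx.
Qed.

Lemma sr_adjI (u v : V) a b : a != b -> coord u a != coord v a -> coord u b != coord v b ->
  (forall i, i != a -> i != b -> coord u i = coord v i) -> adj u v.
Proof. by move=> *; apply/sr_adjP; exists a, b. Qed.

Lemma sr_nadj3 (u v : V) p q r : p != q -> p != r -> q != r ->
  coord u p != coord v p -> coord u q != coord v q -> coord u r != coord v r -> ~~ adj u v.
Proof.
move=> pq pr qr hp hq hr; rewrite sr_adjE; apply/negP => /eqP card_diff.
have : #|[set p; q; r]| <= 2.
  rewrite -card_diff; apply/subset_leq_card/subsetP => i.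
  by rewrite !inE => /orP[/orP[]|] /eqP ->.
by rewrite -setUA cardsU1 cards2 qr !inE (negbTE pq) (negbTE pr).
Qed.

Lemma sr_adj_irr : irreflexive adj.
Proof. by move=> u; rewrite sr_adjE (eq_card0 (A := _)) // => i; rewrite !inE eqxx. Qed.

Lemma sr_adj_sym : symmetric adj.
Proof.
by move=> u v; rewrite !sr_adjE; congr (_ == _); apply: eq_card => i; rewrite !inE eq_sym.
Qed.

Lemma coord_add2_eq (u v : V) a b : a != b ->
  (forall i, i != a -> i != b -> coord u i = coord v i) ->
  coord u a + coord u b = coord v a + coord v b.
Proof.
move=> ab uv; have := sum_coord u; rewrite -(sum_coord v) !(sum_split2 _ ab).
by rewrite (eq_bigr (coord v)) => [/addIn|i /andP[]] //; apply: uv.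
Qed.

Lemma coord_add3_eq (u v : V) a b c : a != b -> a != c -> b != c ->
  (forall i, i != a -> i != b -> i != c -> coord u i = coord v i) ->
  coord u a + coord u b + coord u c = coord v a + coord v b + coord v c.
Proof.
move=> ab ac bc uv; have := sum_coord u; rewrite -(sum_coord v) !(sum_split3 _ ab ac bc).
by rewrite (eq_bigr (coord v)) => [/addIn|i /and3P[]] //; apply: uv.
Qed.

Lemma sum_agree_off3 (f : 'I_m -> nat) (u : V) a b c : a != b -> a != c -> b != c ->
  (forall i, i != a -> i != b -> i != c -> f i = coord u i) ->
  f a + f b + f c = coord u a + coord u b + coord u c -> \sum_i f i = n.
Proof.
move=> ab ac bc fu E; rewrite -(sum_coord u) !(sum_split3 _ ab ac bc) E.
by congr (_ + _); apply: eq_bigr => i /and3P[]; apply: fu.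
Qed.

Lemma sr_vertex_eq_off1 (x y : V) p : (forall i, i != p -> coord x i = coord y i) -> x = y.
Proof.
move=> xy; apply: coord_inj => i; have [->|] := eqVneq i p; last exact: xy.
have := sum_coord x; rewrite -(sum_coord y) (bigD1 p) // [X in _ = X](bigD1 p) //=.
by rewrite (eq_bigr (coord y)) => [/addIn|j /xy].
Qed.

Lemma eq_or_sr_adj (x y : V) c c' : (forall i, i != c -> i != c' -> coord x i = coord y i) ->
  x = y \/ adj x y.
Proof.
move=> xy; have [xyc | xyc] := eqVneq (coord x c) (coord y c).
  left; apply: (sr_vertex_eq_off1 (p := c')) => i ic'.
  by have [->|ic] := eqVneq i c; last exact: xy.
have cc' : c != c'.
  apply: contraNneq xyc => cc'; suff -> : x = y by rewrite eqxx.
  by apply: (sr_vertex_eq_off1 (p := c)) => i ic; apply: xy; rewrite -?cc'.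
right; apply: (sr_adjI cc' xyc) => //.
by apply: contraNneq xyc => /eqP xyc'; have := coord_add2_eq cc' xy; lia.
Qed.

End SRVertices.

Ltac simpl_ifs := repeat first [ progress (rewrite eqxx /=) | match goal with
  | H : is_true (?x != ?y) |- context [?x == ?y] => rewrite (negbTE H) /=
  | H : is_true (?y != ?x) |- context [?x == ?y] => rewrite [x == y]eq_sym (negbTE H) /=
  end].

Ltac case_ifs := repeat first [progress simpl_ifs | match goal with
  | |- context [if ?i == ?j then _ else _] =>
      let E := fresh "E" in let ne := fresh "ne" in
      case: (eqVneq i j) => [E|ne]; [subst i|]
  end].

Section Diamond.
Variables m n : nat.
Local Notation V := (SRV m n).
Local Notation adj := (@sr_adj m n).

(* The common neighbours of [u] and [v = u - t e_a + t e_b] are of three kinds: on the line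
   through [u] and [v] ([x] differs from [u] only at [a] and [b]), [u + t e_b - t e_c], or
   [u - t e_a + t e_c], for some third position [c]. *)
Definition line_nbr (u v x : V) a b :=
  [/\ coord x a + coord x b = coord u a + coord u b, coord x a != coord u a,
      coord x a != coord v a & forall i, i != a -> i != b -> coord x i = coord u i].
Definition into_nbr (u x : V) a b t c :=
  [/\ (c != a) && (c != b), coord x a = coord u a, coord x b = coord u b + t,
      coord x c + t = coord u c & forall i, i != a -> i != b -> i != c -> coord x i = coord u i].
Definition outof_nbr (u x : V) a b t c :=
  [/\ (c != a) && (c != b), coord x a + t = coord u a, coord x b = coord u b,
      coord x c = coord u c + t & forall i, i != a -> i != b -> i != c -> coord x i = coord u i].

Lemma sr_adj_partner (u x : V) c : adj u x -> coord u c != coord x c ->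
  exists d, [/\ d != c, coord u d != coord x d &
                forall i, i != c -> i != d -> coord u i = coord x i].
Proof.
case/sr_adjP => p [q [pq hp hq ho]] hc.
have [->|cp] := eqVneq c p; first by exists q; rewrite eq_sym.
have [->|cq] := eqVneq c q; first by exists p; split => // i i1 i2; apply: ho.
by move: (ho c cp cq) => /eqP; rewrite (negbTE hc).
Qed.

Variables (u v : V) (a b : 'I_m) (t : nat).
Hypotheses (ab : a != b) (t_gt0 : 0 < t).
Hypotheses (hva : coord v a + t = coord u a) (hvb : coord v b = coord u b + t).
Hypothesis hvo : forall i, i != a -> i != b -> coord v i = coord u i.

Lemma common_nbr_off_line (x : V) c : adj u x -> adj v x ->
  c != a -> c != b -> coord x c != coord u c -> into_nbr u x a b t c \/ outof_nbr u x a b t c.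
Proof.
move=> ux vx ca cb xc.
have uc : coord u c != coord x c by rewrite eq_sym.
have vc : coord v c != coord x c by rewrite hvo // eq_sym.
have [d [dc ud hu]] := sr_adj_partner ux uc.
have [d' [dc' vd hv]] := sr_adj_partner vx vc.
have [ad|ad] := eqVneq a d.
  subst d; have xb : coord x b = coord u b by rewrite -hu // neq_sym.
  have bd' : b = d'.
    apply/eqP; apply: contraT => bd'; move: (hv b (neq_sym cb) bd').
    by rewrite xb hvb; clear -t_gt0; lia.
  subst d'.
  have xa : coord x a = coord v a by rewrite -hv // neq_sym.
  have xo i : i != a -> i != b -> i != c -> coord x i = coord u i by move=> ia ib ic; rewrite -hu.
  have sum_abc := coord_add3_eq ab (neq_sym ca) (neq_sym cb) xo.
  by right; split => //; [rewrite ca cb | rewrite xa hva | clear -sum_abc xa xb hva; lia].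
have xa : coord x a = coord u a by rewrite -hu // neq_sym.
have ad' : a = d'.
  apply/eqP; apply: contraT => ad'; move: (hv a (neq_sym ca) ad').
  by rewrite xa -hva; clear -t_gt0; lia.
subst d'.
have xb : coord x b = coord v b by rewrite -hv // neq_sym.
have xo i : i != a -> i != b -> i != c -> coord x i = coord u i.
  by move=> ia ib ic; rewrite -hv // hvo.
have sum_abc := coord_add3_eq ab (neq_sym ca) (neq_sym cb) xo.
by left; split => //; [rewrite ca cb | rewrite xb hvb | clear -sum_abc xa xb hvb; lia].
Qed.

Lemma common_nbr_cases (x : V) : adj u x -> adj v x ->
  line_nbr u v x a b \/ (exists c, into_nbr u x a b t c) \/ (exists c, outof_nbr u x a b t c).
Proof.
move=> ux vx.
have [/existsP[c /and3P[ca cb xc]] | /existsPn agree] :=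
  boolP [exists c, [&& c != a, c != b & coord x c != coord u c]].
  by right; case: (common_nbr_off_line ux vx ca cb xc) => ?; [left|right]; exists c.
have xo i : i != a -> i != b -> coord x i = coord u i.
  by move=> ia ib; move: (agree i); rewrite ia ib negbK => /eqP.
have vxo i : i != a -> i != b -> coord x i = coord v i by move=> ia ib; rewrite xo // hvo.
left; split; first exact: coord_add2_eq.
- apply: contraTneq ux => xua; suff -> : u = x by rewrite sr_adj_irr.
  apply: (sr_vertex_eq_off1 (p := b)) => i ib.
  by have [->|ia] := eqVneq i a; last rewrite xo.
- apply: contraTneq vx => xva; suff -> : v = x by rewrite sr_adj_irr.
  apply: (sr_vertex_eq_off1 (p := b)) => i ib.
  by have [->|ia] := eqVneq i a; last rewrite vxo.
- exact: xo.
Qed.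

Ltac solve_coords := rewrite ?coord_sr_vertex; case_ifs; try done;
  try (match goal with H : is_true (?x != ?x) |- _ => by rewrite eqxx in H end); try lia.

Lemma fresh_nbr_into_outof (x y : V) c : into_nbr u x a b t c -> outof_nbr u y a b t c ->
  exists w, [/\ adj x w, adj y w, w != u & w != v].
Proof.
case=> /andP[ca cb] xa xb xc xo; case=> _ ya yb yc yo.
pose f i := if i == a then coord u a - t else if i == b then coord u b + t + t
  else if i == c then coord u c - t else coord u i.
have f_sum : \sum_i f i = n.
  apply: (sum_agree_off3 (u := u) ab (neq_sym ca) (neq_sym cb)); rewrite /f.
    by move=> i ia ib ic; solve_coords.
  solve_coords.
exists (sr_vertex f_sum); split.
- apply: (@sr_adjI m n x _ a b) => //; rewrite /f; solve_coords.
  move=> i ia ib; solve_coords; by rewrite xo // neq_sym.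
- apply: (@sr_adjI m n y _ b c) => //; rewrite /f; solve_coords.
  move=> i ib ic; solve_coords; by rewrite yo // neq_sym.
- apply: (neq_coord (i := b)); rewrite /f; solve_coords.
- apply: (neq_coord (i := b)); rewrite /f; solve_coords.
Qed.

Lemma fresh_nbr_into_outof_neq (x y : V) c c' :
  into_nbr u x a b t c -> outof_nbr u y a b t c' -> c != c' ->
  exists w, [/\ adj x w, adj y w, w != u & w != v].
Proof.
case=> /andP[ca cb] xa xb xc xo; case=> /andP[ca' cb'] ya yb yc yo cc'.
have xc' : coord x c' = coord u c' by rewrite xo // neq_sym.
have yc0 : coord y c = coord u c by rewrite yo.
have vc : coord v c = coord u c by rewrite hvo.
pose f i := if i == a then coord u a else if i == b then coord u b
  else if i == c then coord u c - t else if i == c' then coord u c' + t else coord u i.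
have f_sum : \sum_i f i = n.
  apply: (sum_agree_off3 (u := u) (neq_sym ca) (neq_sym ca') cc'); rewrite /f.
    by move=> i ia ic ic'; solve_coords.
  solve_coords.
exists (sr_vertex f_sum); split.
- apply: (@sr_adjI m n x _ b c') => //; rewrite /f; solve_coords.
  move=> i ib ic'; solve_coords; by rewrite xo // neq_sym.
- apply: (@sr_adjI m n y _ a c) => //; rewrite /f; solve_coords.
  move=> i ia ic; solve_coords; by rewrite yo // neq_sym.
- apply: (neq_coord (i := c)); rewrite /f; solve_coords.
- apply: (neq_coord (i := c)); rewrite /f; solve_coords.
Qed.

Lemma fresh_nbr_line_into (x y : V) c : line_nbr u v x a b -> into_nbr u y a b t c ->
  exists w, [/\ adj x w, adj y w, w != u & w != v].
Proof.
case=> xs xa xav xo; case=> /andP[ca cb] ya yb yc yo.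
have xc : coord x c = coord u c by rewrite xo.
have vc : coord v c = coord u c by rewrite hvo.
pose f i := if i == a then coord x a else if i == b then coord x b + t
  else if i == c then coord u c - t else coord u i.
have f_sum : \sum_i f i = n.
  apply: (sum_agree_off3 (u := u) ab (neq_sym ca) (neq_sym cb)); rewrite /f.
    by move=> i ia ib ic; solve_coords.
  solve_coords.
exists (sr_vertex f_sum); split.
- apply: (@sr_adjI m n x _ b c) => //; rewrite /f; solve_coords.
  move=> i ib ic; solve_coords; by rewrite xo // neq_sym.
- apply: (@sr_adjI m n y _ a b) => //; rewrite /f; solve_coords.
  move=> i ia ib; solve_coords; by rewrite yo // neq_sym.
- apply: (neq_coord (i := c)); rewrite /f; solve_coords.
- apply: (neq_coord (i := c)); rewrite /f; solve_coords.
Qed.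

Lemma fresh_nbr_line_outof (x y : V) c : line_nbr u v x a b -> outof_nbr u y a b t c ->
  exists w, [/\ adj x w, adj y w, w != u & w != v].
Proof.
case=> xs xa xav xo; case=> /andP[ca cb] ya yb yc yo.
have xc : coord x c = coord u c by rewrite xo.
have vc : coord v c = coord u c by rewrite hvo.
case: (ltnP (coord x a) t) => ht.
  pose f i := if i == a then coord x a else if i == b then coord u b
    else if i == c then coord u c + coord u a - coord x a else coord u i.
  have f_sum : \sum_i f i = n.
    apply: (sum_agree_off3 (u := u) ab (neq_sym ca) (neq_sym cb)); rewrite /f.
      by move=> i ia ib ic; solve_coords.
    solve_coords.
  exists (sr_vertex f_sum); split.
  - apply: (@sr_adjI m n x _ b c) => //; rewrite /f; solve_coords.
    move=> i ib ic; solve_coords; by rewrite xo // neq_sym.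
  - apply: (@sr_adjI m n y _ a c) => //; rewrite /f; solve_coords.
    move=> i ia ic; solve_coords; by rewrite yo // neq_sym.
  - apply: (neq_coord (i := c)); rewrite /f; solve_coords.
  - apply: (neq_coord (i := c)); rewrite /f; solve_coords.
pose f i := if i == a then coord x a - t else if i == b then coord x b
  else if i == c then coord u c + t else coord u i.
have f_sum : \sum_i f i = n.
  apply: (sum_agree_off3 (u := u) ab (neq_sym ca) (neq_sym cb)); rewrite /f.
    by move=> i ia ib ic; solve_coords.
  solve_coords.
exists (sr_vertex f_sum); split.
- apply: (@sr_adjI m n x _ a c) => //; rewrite /f; solve_coords.
  move=> i ia ic; solve_coords; by rewrite xo // neq_sym.
- apply: (@sr_adjI m n y _ a b) => //; rewrite /f; solve_coords.
  move=> i ia ib; solve_coords; by rewrite yo // neq_sym.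
- apply: (neq_coord (i := c)); rewrite /f; solve_coords.
- apply: (neq_coord (i := c)); rewrite /f; solve_coords.
Qed.

Lemma fresh_common_nbr (x y : V) : x != y -> ~~ adj x y ->
  adj u x -> adj v x -> adj u y -> adj v y ->
  exists w, [/\ adj x w, adj y w, w != u & w != v].
Proof.
move=> xy nxy ux vx uy vy.
have same_kind p q : (forall i, i != p -> i != q -> coord x i = coord y i) -> False.
  by case/eq_or_sr_adj => [/eqP|]; [rewrite (negbTE xy) | rewrite (negbTE nxy)].
have sw : (exists w, [/\ adj y w, adj x w, w != u & w != v]) ->
          exists w, [/\ adj x w, adj y w, w != u & w != v].
  by case=> w [h1 h2 h3 h4]; exists w.
have [Lx|[[c Px]|[c Qx]]] := common_nbr_cases ux vx;
  have [Ly|[[c' Py]|[c' Qy]]] := common_nbr_cases uy vy.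
- case: Lx Ly => [_ _ _ xo] [_ _ _ yo]; case: (same_kind a b) => i ia ib.
  by rewrite xo // yo.
- exact: fresh_nbr_line_into Lx Py.
- exact: fresh_nbr_line_outof Lx Qy.
- by apply: sw; exact: fresh_nbr_line_into Ly Px.
- case: Px Py => [_ xa xb _ xo] [_ ya yb _ yo]; case: (same_kind c c') => i ic ic'.
  have [->|ia] := eqVneq i a; first by rewrite xa ya.
  have [->|ib] := eqVneq i b; first by rewrite xb yb.
  by rewrite xo // yo.
- have [cc'|cc'] := eqVneq c c'; last exact: fresh_nbr_into_outof_neq Px Qy cc'.
  by rewrite -cc' in Qy; exact: fresh_nbr_into_outof Px Qy.
- by apply: sw; exact: fresh_nbr_line_outof Ly Qx.
- apply: sw; have [cc'|cc'] := eqVneq c' c; last exact: fresh_nbr_into_outof_neq Py Qx cc'.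
  by rewrite -cc' in Qx; exact: fresh_nbr_into_outof Py Qx.
- case: Qx Qy => [_ xa xb _ xo] [_ ya yb _ yo]; case: (same_kind c c') => i ic ic'.
  have [->|ia] := eqVneq i a; first by apply/eqP; rewrite -(eqn_add2r t) xa ya.
  have [->|ib] := eqVneq i b; first by rewrite xb yb.
  by rewrite xo // yo.
Qed.

End Diamond.

Lemma sr_diamond_extensible m n : diamond_extensible (@sr_adj m n).
Proof.
move=> x y z1 z2 xy nxy xz1 yz1 xz2 yz2 /sr_adjP [a [b [ab ha hb ho]]].
have hs := coord_add2_eq ab ho.
wlog lt : a b ab ha hb ho hs / coord z2 a < coord z1 a.
  move=> W; case: (ltnP (coord z2 a) (coord z1 a)) => h; first exact: (W a b).
  apply: (W b a) => //; try by rewrite eq_sym.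
  - by move=> i ib ia; exact: ho.
  - lia.
  - have : coord z2 a != coord z1 a by rewrite eq_sym.
    lia.
have hvo : forall i, i != a -> i != b -> coord z2 i = coord z1 i by move=> i ia ib; rewrite ho.
have tp : 0 < coord z1 a - coord z2 a by lia.
have hva : coord z2 a + (coord z1 a - coord z2 a) = coord z1 a by lia.
have hvb : coord z2 b = coord z1 b + (coord z1 a - coord z2 a) by lia.
by apply: (fresh_common_nbr ab tp hva hvb hvo) => //; rewrite sr_adj_sym.
Qed.

Definition i0 : 'I_4 := @Ordinal 4 0 isT.
Definition i1 : 'I_4 := @Ordinal 4 1 isT.
Definition i2 : 'I_4 := @Ordinal 4 2 isT.
Definition i3 : 'I_4 := @Ordinal 4 3 isT.

Lemma ord4P (j : 'I_4) : [\/ j = i0, j = i1, j = i2 | j = i3].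
Proof.
case: j => -[|[|[|[|k]]]] jlt //.
- by constructor 1; apply: val_inj.
- by constructor 2; apply: val_inj.
- by constructor 3; apply: val_inj.
- by constructor 4; apply: val_inj.
Qed.

Lemma sum_ord4 (F : 'I_4 -> nat) : \sum_i F i = F i0 + F i1 + F i2 + F i3.
Proof.
rewrite !big_ord_recl big_ord0 addn0 !addnA.
by congr (_ + _ + _ + _); congr F; apply: val_inj.
Qed.

Lemma card_ord4 (P : pred 'I_4) : #|[set i | P i]| = P i0 + P i1 + P i2 + P i3.
Proof. by rewrite -sum1dep_card big_mkcond /= sum_ord4; do 4!case: (P _). Qed.

Lemma card_imset_sub (U T : finType) (g : U -> T) (P : pred T) : injective g ->
  #|[set t in g @: setT | P t]| = #|[set i | P (g i)]|.
Proof.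
move=> g_inj; rewrite -(card_imset _ g_inj); apply: eq_card => t; rewrite !inE.
apply/andP/imsetP => [[/imsetP[i _ ->] Pt]|[i + ->]]; first by exists i; rewrite ?inE.
by rewrite inE => Pi; split => //; apply: imset_f.
Qed.

Ltac decide_nat_eqs :=
  repeat (match goal with |- context [?x == ?y] => case: (x =P y) => ? end); simpl; lia.

Section UnitClique.
Variable n : nat.
Hypothesis n_ge3 : 3 <= n.
Local Notation V := (SRV 4 n).
Local Notation adj := (@sr_adj 4 n).

Lemma sr_adj4E (u v : V) : adj u v =
  ((coord u i0 != coord v i0) + (coord u i1 != coord v i1) +
   (coord u i2 != coord v i2) + (coord u i3 != coord v i3) == 2).
Proof. by rewrite sr_adjE card_ord4. Qed.

Lemma sum_coord4 (v : V) : coord v i0 + coord v i1 + coord v i2 + coord v i3 = n.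
Proof. by rewrite -sum_ord4 sum_coord. Qed.

Lemma coord4_inj (u v : V) : coord u i0 = coord v i0 -> coord u i1 = coord v i1 ->
  coord u i2 = coord v i2 -> coord u i3 = coord v i3 -> u = v.
Proof. by move=> *; apply: coord_inj => j; case: (ord4P j) => ->. Qed.

Definition vertex4 a b c d (abcd : a + b + c + d = n) : V :=
  sr_vertex (etrans (sum_ord4 (nth 0 [:: a; b; c; d])) abcd).

Lemma coord_vertex4 a b c d (abcd : a + b + c + d = n) j :
  coord (vertex4 abcd) j = nth 0 [:: a; b; c; d] j.
Proof. exact: coord_sr_vertex. Qed.

Lemma unit_vertex_subproof (i : 'I_4) : \sum_j (if j == i then n else 0) = n.
Proof. by rewrite (bigD1 i) //= eqxx big1 ?addn0 // => j /negbTE ->. Qed.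

Definition unit_vertex (i : 'I_4) : V := sr_vertex (unit_vertex_subproof i).

Lemma coord_unit_vertex i j : coord (unit_vertex i) j = if j == i then n else 0.
Proof. exact: coord_sr_vertex. Qed.

Lemma unit_vertex_inj : injective unit_vertex.
Proof.
move=> i j /(congr1 (fun v : V => coord v i)); rewrite !coord_unit_vertex eqxx.
by case: eqP => // _; lia.
Qed.

Definition unit_clique : {set V} := unit_vertex @: setT.

Lemma card_unit_clique : #|unit_clique| = 4.
Proof. by rewrite card_imset ?cardsT ?card_ord //; apply: unit_vertex_inj. Qed.

Lemma unit_clique_clique : {in unit_clique &, forall s t, s != t -> adj s t}.
Proof.
move=> _ _ /imsetP[i _ ->] /imsetP[j _ ->] ne.
have ij : i != j by apply: contraNneq ne => ->.
apply: (sr_adjI ij) => [||k ki kj]; rewrite !coord_unit_vertex ?eqxx.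
- by rewrite (negbTE ij); apply/eqP; lia.
- by rewrite (negbTE (neq_sym ij)); apply/eqP; lia.
by rewrite (negbTE ki) (negbTE kj).
Qed.

Lemma coord_neq_n (w : V) k : w \notin unit_clique -> coord w k != n.
Proof.
apply: contraNneq => wk; apply/imsetP; exists k => //; apply: coord_inj => j.
rewrite coord_unit_vertex; case: eqP => [->//|/eqP jk].
have := sum_coord w; rewrite (bigD1 k) //= wk => /eqP.
rewrite -[X in _ == X]addn0 eqn_add2l sum_nat_eq0 => /forallP/(_ j).
by rewrite jk => /eqP.
Qed.

Definition nz_coords (w : V) : nat :=
  (coord w i0 != 0) + (coord w i1 != 0) + (coord w i2 != 0) + (coord w i3 != 0).

(* Outside the clique, [w] is adjacent to [n e_k] iff [w] has exactly one nonzero coordinate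
   besides [k]. *)
Lemma nbrs_in_unit_clique (w : V) : w \notin unit_clique ->
  nbrs_in adj unit_clique w = ((nz_coords w == 2) * 2)%N.
Proof.
move=> wC; rewrite /nbrs_in card_imset_sub; last exact: unit_vertex_inj.
rewrite card_ord4 !sr_adj4E !coord_unit_vertex /nz_coords /=.
have := coord_neq_n i0 wC; have := coord_neq_n i1 wC.
have := coord_neq_n i2 wC; have := coord_neq_n i3 wC; have := sum_coord4 w.
move: (coord w i0) (coord w i1) (coord w i2) (coord w i3) => a b c d.
move=> sum_w d_n c_n b_n a_n; rewrite (negbTE a_n) (negbTE b_n) (negbTE c_n) (negbTE d_n) /=.
by case: (a =P 0); case: (b =P 0); case: (c =P 0); case: (d =P 0) => /= *; lia.
Qed.

Lemma unit_clique_gm : forall w, w \notin unit_clique -> nbrs_in adj unit_clique w \in [:: 0; 2; 4].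
Proof. by move=> w /nbrs_in_unit_clique ->; case: (_ == 2). Qed.


Lemma mem_unit_clique (w : V) : w \in unit_clique -> exists k, coord w k = n.
Proof. by case/imsetP => k _ ->; exists k; rewrite coord_unit_vertex eqxx. Qed.

Local Notation sw := (gm_switch adj unit_clique).

Lemma gm_switch_unit_clique (u v : V) : u \in unit_clique -> v \notin unit_clique ->
  sw u v = adj u v (+) (nz_coords v == 2).
Proof. by move=> uC vC; rewrite gm_switch_in_out // nbrs_in_unit_clique //; case: (_ == 2). Qed.

Lemma unit_y_subproof : 0 + 1 + 1 + (n - 2) = n. Proof. lia. Qed.
Lemma unit_z1_subproof : 0 + 1 + (n - 1) + 0 = n. Proof. lia. Qed.
Lemma unit_z2_subproof : 0 + (n - 1) + 1 + 0 = n. Proof. lia. Qed.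

Definition unit_x : V := unit_vertex i3.
Definition unit_y : V := vertex4 unit_y_subproof.
Definition unit_z1 : V := vertex4 unit_z1_subproof.
Definition unit_z2 : V := vertex4 unit_z2_subproof.

Lemma unit_x_in : unit_x \in unit_clique.
Proof. exact: imset_f. Qed.

Lemma unit_witnesses_out : [/\ unit_y \notin unit_clique, unit_z1 \notin unit_clique
  & unit_z2 \notin unit_clique].
Proof.
by split; apply/negP => /mem_unit_clique[k]; case: (ord4P k) => ->;
  rewrite coord_vertex4 /=; lia.
Qed.

Lemma unit_common_nbrs (z : V) : sw unit_x z -> sw unit_y z -> z = unit_z1 \/ z = unit_z2.
Proof.
have [yC _ _] := unit_witnesses_out.
have [zC|zC] := boolP (z \in unit_clique).
  move=> _; rewrite gm_switch_out_in // nbrs_in_unit_clique //.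
  case/imsetP: zC => k _ ->; rewrite sr_adj4E /nz_coords !coord_vertex4 !coord_unit_vertex.
  by case: (ord4P k) => -> /=; decide_nat_eqs.
rewrite gm_switch_unit_clique ?unit_x_in // gm_switch_out // !sr_adj4E /nz_coords.
rewrite !coord_vertex4 !coord_unit_vertex /= ![0 == _]eq_sym ![1 == _]eq_sym.
rewrite [n == _]eq_sym [n - 2 == _]eq_sym (negbTE (coord_neq_n i3 zC)) /=.
have := sum_coord4 z.
set a := coord z i0; set b := coord z i1; set c := coord z i2; set d := coord z i3.
move=> sum_z swx swy.
have d0 : d = 0.
  by apply/eqP; apply: contraTT swx => dn0; rewrite dn0 addbb.
rewrite d0 /= in swx swy sum_z.
have a0 : a = 0.
  apply/eqP; apply: contraTT swy => an0; rewrite an0 /=.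
  by move: swx; rewrite an0; decide_nat_eqs.
have [b1|b1] := eqVneq b 1; [left|right]; apply: coord4_inj; rewrite !coord_vertex4 //=.
- by lia.
- move: swy; rewrite a0 b1 /=; decide_nat_eqs.
- move: swy; rewrite a0 (negbTE b1) /=; decide_nat_eqs.
Qed.

Lemma unit_switch_not_diamond_extensible : ~ diamond_extensible sw.
Proof.
have [yC z1C z2C] := unit_witnesses_out; have xC := unit_x_in.
move=> ext; have [|||||||w [xw yw]] := ext unit_x unit_y unit_z1 unit_z2.
- by apply: (neq_coord (i := i3)); rewrite coord_unit_vertex coord_vertex4 /=; decide_nat_eqs.
- by rewrite gm_switch_unit_clique // sr_adj4E /nz_coords !coord_vertex4 !coord_unit_vertex /=;
    decide_nat_eqs.
- by rewrite gm_switch_unit_clique // sr_adj4E /nz_coords !coord_vertex4 !coord_unit_vertex /=;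
    decide_nat_eqs.
- by rewrite gm_switch_out // sr_adj4E !coord_vertex4 /=; decide_nat_eqs.
- by rewrite gm_switch_unit_clique // sr_adj4E /nz_coords !coord_vertex4 !coord_unit_vertex /=;
    decide_nat_eqs.
- by rewrite gm_switch_out // sr_adj4E !coord_vertex4 /=; decide_nat_eqs.
- by rewrite gm_switch_out // sr_adj4E !coord_vertex4 /=; decide_nat_eqs.
by case: (unit_common_nbrs xw yw) => ->; rewrite eqxx.
Qed.

End UnitClique.

Section SplitClique.
Variable m : nat.
Hypothesis m_gt3 : 3 < m.
Local Notation V := (SRV m 3).
Local Notation adj := (@sr_adj m 3).

Definition p0 : 'I_m := Ordinal (ltn_trans (isT : 0 < 3) m_gt3).
Definition p1 : 'I_m := Ordinal (ltn_trans (isT : 1 < 3) m_gt3).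
Definition p2 : 'I_m := Ordinal (ltn_trans (isT : 2 < 3) m_gt3).
Definition p3 : 'I_m := Ordinal m_gt3.
Lemma p01 : p0 != p1. Proof. by []. Qed.
Lemma p02 : p0 != p2. Proof. by []. Qed.
Lemma p03 : p0 != p3. Proof. by []. Qed.
Lemma p12 : p1 != p2. Proof. by []. Qed.
Lemma p13 : p1 != p3. Proof. by []. Qed.
Lemma p23 : p2 != p3. Proof. by []. Qed.

Ltac ord_neqs := have := p01; have := p02; have := p03; have := p12; have := p13; have := p23;
  move=> ? ? ? ? ? ?.

Lemma split_vertex_subproof (k : 'I_4) :
  \sum_i (if i == p0 then val k else if i == p1 then 3 - val k else 0) = 3.
Proof.
rewrite (sum_split2 _ p01) eqxx (negbTE (neq_sym p01)) eqxx big1 ?addn0.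
  by case: k => -[|[|[|[|]]]].
by move=> i /andP [/negbTE -> /negbTE ->].
Qed.

Definition split_vertex (k : 'I_4) : V := sr_vertex (split_vertex_subproof k).

Lemma coord_split_vertex k i :
  coord (split_vertex k) i = if i == p0 then val k else if i == p1 then 3 - val k else 0.
Proof. by rewrite coord_sr_vertex. Qed.

Lemma split_vertex_inj : injective split_vertex.
Proof.
move=> k k' E; apply: val_inj; move: (coord_split_vertex k p0); rewrite E coord_split_vertex eqxx.
by move=> ->.
Qed.

Definition split_clique : {set V} := split_vertex @: [set: 'I_4].

Lemma card_split_clique : #|split_clique| = 4.
Proof. by rewrite card_imset ?cardsT ?card_ord //; apply: split_vertex_inj. Qed.

Lemma mem_split_clique (w : V) : w \in split_clique -> coord w p0 + coord w p1 = 3.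
Proof.
case/imsetP => k _ ->; rewrite !coord_split_vertex eqxx (negbTE (neq_sym p01)) eqxx.
by case: k => -[|[|[|[|]]]].
Qed.

Lemma notin_split_clique (w : V) j : j != p0 -> j != p1 -> coord w j != 0 -> w \notin split_clique.
Proof.
move=> j0 j1 hj; apply/negP => /mem_split_clique w01.
move: (sum_coord w); rewrite (sum_split2 _ p01) w01 (bigD1 j) /=; last by rewrite j0 j1.
by move: hj; case: (coord w j) => // x _; lia.
Qed.

Lemma split_clique_clique : {in split_clique &, forall s t, s != t -> adj s t}.
Proof.
move=> _ _ /imsetP[k _ ->] /imsetP[k' _ ->] ne.
have {ne} kk : val k != val k' by apply: contraNneq ne => /val_inj ->.
apply: (sr_adjI p01); rewrite ?coord_split_vertex ?eqxx ?(negbTE (neq_sym p01)) //.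
  by move: kk; case: k => -[|[|[|[|]]]] ?; case: k' => -[|[|[|[|]]]] ?.
by move=> i /negbTE i0 /negbTE i1; rewrite !coord_split_vertex i0 i1.
Qed.

Lemma split_clique_out_cases (z : V) : z \notin split_clique ->
  exists j, [/\ (j != p0) && (j != p1), 0 < coord z j &
  (forall i, i != p0 -> i != p1 -> i != j -> coord z i = 0) \/
  (exists j', [&& j' != p0, j' != p1, j' != j & coord z j' != 0])].
Proof.
move=> zC.
have sum_z := sum_coord z; rewrite (sum_split2 _ p01) in sum_z.
have : 0 < \sum_(i | (i != p0) && (i != p1)) coord z i.
  rewrite lt0n; apply/negP => /eqP E; move/negP: zC; apply.
  have hs : coord z p0 + coord z p1 = 3 by lia.
  have zb : coord z p0 < 4 by lia.
  have -> : z = split_vertex (Ordinal zb); last by apply: imset_f.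
  apply: coord_inj => i; rewrite coord_split_vertex /=.
  case: (eqVneq i p0) => [->//|i0]; case: (eqVneq i p1) => [->|i1]; first lia.
  move/eqP: E; rewrite sum_nat_eq0 => /forallP /(_ i); rewrite i0 i1 /=.
  by move/eqP.
case/exists_pos_summand => j j01 jpos; exists j; split => //.
case: (boolP [exists j', [&& j' != p0, j' != p1, j' != j & coord z j' != 0]]).
  by case/existsP => j' j'_nz; right; exists j'.
move/existsPn => N; left => i i0 i1 ij; move: (N i); rewrite i0 i1 ij /= negbK.
by move/eqP.
Qed.

Lemma sum_coord_single (z : V) j : j != p0 -> j != p1 ->
  (forall i, i != p0 -> i != p1 -> i != j -> coord z i = 0) ->
  coord z p0 + coord z p1 + coord z j = 3.
Proof.
move=> j0 j1 zo; have := sum_coord z.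
rewrite (sum_split3 _ p01 (neq_sym j0) (neq_sym j1)) big1 ?addn0 //.
by move=> i /and3P[]; exact: zo.
Qed.

(* Such a [z] is adjacent exactly to [split_vertex (coord z p0)] and
   [split_vertex (3 - coord z p1)], which differ since [coord z p0 + coord z p1 < 3]. *)
Lemma adj_split_vertex_single (z : V) j k : j != p0 -> j != p1 -> 0 < coord z j ->
  (forall i, i != p0 -> i != p1 -> i != j -> coord z i = 0) ->
  adj z (split_vertex k) = ((coord z p0 != val k) + (coord z p1 != 3 - val k) == 1).
Proof.
move=> j0 j1 zj_gt0 zo.
have gj : coord (split_vertex k) j = 0 by rewrite coord_split_vertex (negbTE j0) (negbTE j1).
have zj : coord z j != coord (split_vertex k) j by rewrite gj -lt0n.
have g0 : coord (split_vertex k) p0 = val k by rewrite coord_split_vertex eqxx.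
have g1 : coord (split_vertex k) p1 = 3 - val k.
  by rewrite coord_split_vertex (negbTE (neq_sym p01)) eqxx.
have ho i : i != p0 -> i != p1 -> i != j -> coord z i = coord (split_vertex k) i.
  by move=> i0 i1 ij; rewrite zo // coord_split_vertex (negbTE i0) (negbTE i1).
have [e0|e0] := eqVneq (coord z p0) (val k); have [e1|e1] := eqVneq (coord z p1) (3 - val k).
- suff -> : z = split_vertex k by rewrite sr_adj_irr.
  apply: (sr_vertex_eq_off1 (p := j)) => i ij.
  have [->|i0] := eqVneq i p0; first by rewrite g0.
  have [->|i1] := eqVneq i p1; first by rewrite g1.
  exact: ho.
- apply: (sr_adjI (neq_sym j1)); rewrite ?g1 // => i i1 ij.
  by have [->|i0] := eqVneq i p0; [rewrite g0 | apply: ho].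
- apply: (sr_adjI (neq_sym j0)); rewrite ?g0 // => i i0 ij.
  by have [->|i1] := eqVneq i p1; [rewrite g1 | apply: ho].
- by apply/negbTE; apply: (sr_nadj3 p01 (neq_sym j0) (neq_sym j1)); rewrite ?g0 ?g1.
Qed.

Lemma nbrs_in_split_single (z : V) j : j != p0 -> j != p1 -> 0 < coord z j ->
  (forall i, i != p0 -> i != p1 -> i != j -> coord z i = 0) -> nbrs_in adj split_clique z = 2.
Proof.
move=> j0 j1 zj_gt0 zo; have := sum_coord_single j0 j1 zo.
rewrite /nbrs_in card_imset_sub; last exact: split_vertex_inj.
rewrite card_ord4 !(adj_split_vertex_single _ j0 j1 zj_gt0 zo) /= => sum_z.
have : coord z p0 + coord z p1 < 3 by lia.
by move: (coord z p0) (coord z p1) => [|[|[|a]]] [|[|[|b]]].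
Qed.

Lemma nbrs_in_split_multi (z : V) j j' : j != p0 -> j != p1 -> 0 < coord z j ->
  j' != p0 -> j' != p1 -> j' != j -> coord z j' != 0 -> nbrs_in adj split_clique z = 0.
Proof.
move=> j0 j1 jp j'0 j'1 j'j j'p.
apply/eqP; rewrite cards_eq0; apply/eqP/setP => t; rewrite !inE.
apply/negbTE; apply/negP => /andP [/imsetP [k _ ->]].
have gj : forall i, i != p0 -> i != p1 -> coord (split_vertex k) i = 0.
  by move=> i i0 i1; rewrite coord_split_vertex (negbTE i0) (negbTE i1).
have sum_z := sum_coord z.
rewrite (sum_split3 _ p01 (neq_sym j0) (neq_sym j1)) (bigD1 j') /= in sum_z; last first.
  by rewrite j'0 j'1 j'j.
have zj : coord z j != coord (split_vertex k) j by rewrite gj // -lt0n.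
have zj' : coord z j' != coord (split_vertex k) j' by rewrite gj.
case: (eqVneq (coord z p0) (coord (split_vertex k) p0)) => e0.
  have e1 : coord z p1 != coord (split_vertex k) p1.
    move: e0; rewrite !coord_split_vertex eqxx (negbTE (neq_sym p01)) eqxx => e0.
    by apply/eqP => e1; move: j'p; rewrite -lt0n => j'p; lia.
  by apply/negP; apply: (sr_nadj3 (neq_sym j1) (neq_sym j'1) (neq_sym j'j)).
by apply/negP; apply: (sr_nadj3 (neq_sym j0) (neq_sym j'0) (neq_sym j'j)).
Qed.

Lemma split_clique_gm (w : V) :
  w \notin split_clique -> nbrs_in adj split_clique w \in [:: 0; 2; 4].
Proof.
move=> /split_clique_out_cases[j [/andP[j0 j1] jp [zo|[j' /and4P[j'0 j'1 j'j zj']]]]].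
  by rewrite (nbrs_in_split_single j0 j1 jp zo).
by rewrite (nbrs_in_split_multi j0 j1 jp j'0 j'1 j'j zj').
Qed.

Local Notation sw := (gm_switch adj split_clique).

Definition ones_at (q1 q2 q3 : 'I_m) i : nat :=
  if i == q1 then 1 else if i == q2 then 1 else if i == q3 then 1 else 0.

Lemma sum_ones_at q1 q2 q3 : q1 != q2 -> q1 != q3 -> q2 != q3 -> \sum_i ones_at q1 q2 q3 i = 3.
Proof.
move=> h12 h13 h23; rewrite (sum_split3 _ h12 h13 h23) /ones_at big1 ?addn0.
  by rewrite eqxx (negbTE (neq_sym h12)) eqxx (negbTE (neq_sym h13)) (negbTE (neq_sym h23)) eqxx.
by move=> i /and3P [/negbTE -> /negbTE -> /negbTE ->].
Qed.

Definition split_x : V := split_vertex i3.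
Definition split_y : V := sr_vertex (sum_ones_at p02 p03 p23).
Definition split_z1 : V := sr_vertex (sum_ones_at p01 p03 p13).
Definition split_z2 : V := sr_vertex (sum_ones_at p01 p02 p12).

Ltac eval_coords := rewrite /split_x /split_y /split_z1 /split_z2 ?coord_split_vertex
  ?coord_sr_vertex /ones_at /=; case_ifs; try done.

Lemma split_x_in : split_x \in split_clique. Proof. exact: imset_f. Qed.
Lemma split_y_out : split_y \notin split_clique.
Proof. by ord_neqs; apply: (notin_split_clique (j := p2)) => //; eval_coords. Qed.

Lemma split_z1_out : split_z1 \notin split_clique.
Proof. by ord_neqs; apply: (notin_split_clique (j := p3)) => //; eval_coords. Qed.

Lemma split_z2_out : split_z2 \notin split_clique.
Proof. by ord_neqs; apply: (notin_split_clique (j := p2)) => //; eval_coords. Qed.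

Lemma nbrs_in_split_y : nbrs_in adj split_clique split_y = 0.
Proof. by ord_neqs; apply: (nbrs_in_split_multi (j := p2) (j' := p3)) => //; eval_coords. Qed.

Lemma nbrs_in_split_z1 : nbrs_in adj split_clique split_z1 = 2.
Proof.
by ord_neqs; apply: (nbrs_in_split_single (j := p3)) => //; eval_coords => i *; eval_coords.
Qed.

Lemma nbrs_in_split_z2 : nbrs_in adj split_clique split_z2 = 2.
Proof.
by ord_neqs; apply: (nbrs_in_split_single (j := p2)) => //; eval_coords => i *; eval_coords.
Qed.

Lemma split_y_clique_nbr (z : V) : z \in split_clique -> ~~ sw split_y z.
Proof.
ord_neqs; move=> zC; rewrite gm_switch_out_in ?split_y_out // nbrs_in_split_y /= addbF.
case/imsetP: zC => k _ ->.
have [k1|k1] := eqVneq (val k) 1.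
  by apply: (sr_nadj3 (p := p1) (q := p2) (r := p3)) => //; eval_coords; rewrite k1.
by apply: (sr_nadj3 (p := p0) (q := p2) (r := p3)) => //; eval_coords; rewrite eq_sym.
Qed.

Lemma split_x_multi_nbr (z : V) j j' : j != p0 -> j != p1 -> 0 < coord z j ->
  j' != p0 -> j' != p1 -> j' != j -> coord z j' != 0 -> ~~ sw split_x z.
Proof.
ord_neqs; move=> j0 j1 zj_gt0 j'0 j'1 j'j zj'.
have zC : z \notin split_clique by apply: (notin_split_clique j0 j1); rewrite -lt0n.
rewrite gm_switch_in_out ?split_x_in // (nbrs_in_split_multi j0 j1 zj_gt0 j'0 j'1 j'j zj').
rewrite /= addbF.
have := sum_coord z; rewrite (sum_split3 _ p01 (neq_sym j0) (neq_sym j1)) (bigD1 j') /=;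
  last by rewrite j'0 j'1 j'j.
move=> sum_z; have xo i : i != p0 -> i != p1 -> coord split_x i = 0.
  by move=> i0 i1; eval_coords.
apply: (sr_nadj3 (p := p0) (q := j) (r := j')); try by rewrite eq_sym.
- rewrite /split_x coord_split_vertex eqxx /=; apply/eqP; move: zj'; rewrite -lt0n => zj'.
  by clear -sum_z zj_gt0 zj'; lia.
- by rewrite xo // eq_sym -lt0n.
- by rewrite xo // eq_sym.
Qed.

Lemma split_single_common_nbr (z : V) j : j != p0 -> j != p1 -> 0 < coord z j ->
  (forall i, i != p0 -> i != p1 -> i != j -> coord z i = 0) ->
  ~~ adj split_x z -> adj split_y z -> z = split_z1 \/ z = split_z2.
Proof.
ord_neqs; move=> j0 j1 zj_gt0 zo nxz yz; have sum_z := sum_coord_single j0 j1 zo.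
have yz_diff3 p q r : p != q -> p != r -> q != r -> coord split_y p != coord z p ->
    coord split_y q != coord z q -> coord split_y r != coord z r -> False.
  by move=> pq pr qr yzp yzq yzr; apply: (negP (sr_nadj3 pq pr qr yzp yzq yzr)).
have z1_neq0 : coord z p1 != 0.
  apply: contraNneq nxz => z1_0; apply: (sr_adjI (a := p0) (b := j)) => //.
  - by rewrite eq_sym.
  - by rewrite /split_x coord_split_vertex eqxx /=; apply/eqP; clear -sum_z zj_gt0; lia.
  - by rewrite /split_x coord_split_vertex (negbTE j0) (negbTE j1) eq_sym -lt0n.
  move=> i i0 ij; rewrite /split_x coord_split_vertex (negbTE i0).
  by have [->|i1] := eqVneq i p1; [rewrite z1_0 | rewrite zo].
have [j2|j2] := eqVneq j p2; [|have [j3|j3] := eqVneq j p3].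
- subst j; right.
  have [z0|z0] := eqVneq (coord z p0) 1;
    last by case: (yz_diff3 p0 p1 p3) => //; eval_coords; rewrite ?zo // eq_sym.
  have [z2|z2] := eqVneq (coord z p2) 1;
    last by case: (yz_diff3 p1 p2 p3) => //; eval_coords; rewrite ?zo // eq_sym.
  apply: coord_inj => i; rewrite /split_z2 coord_sr_vertex /ones_at.
  have [->//|i0] := eqVneq i p0; have [->|i1] := eqVneq i p1; first by clear -sum_z z0 z2; lia.
  by have [->//|i2] := eqVneq i p2; rewrite zo.
- subst j; left.
  have [z0|z0] := eqVneq (coord z p0) 1;
    last by case: (yz_diff3 p0 p1 p2) => //; eval_coords; rewrite ?zo // eq_sym.
  have [z3|z3] := eqVneq (coord z p3) 1;
    last by case: (yz_diff3 p1 p3 p2) => //; eval_coords; rewrite ?zo // eq_sym.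
  apply: coord_inj => i; rewrite /split_z1 coord_sr_vertex /ones_at.
  have [->//|i0] := eqVneq i p0; have [->|i1] := eqVneq i p1; first by clear -sum_z z0 z3; lia.
  by have [->//|i3] := eqVneq i p3; rewrite zo.
- case: (yz_diff3 p1 j p2); try by rewrite eq_sym.
  all: eval_coords.
  + by rewrite eq_sym -lt0n.
  + by rewrite zo // neq_sym.
Qed.


Lemma split_common_nbrs (z : V) : sw split_x z -> sw split_y z -> z = split_z1 \/ z = split_z2.
Proof.
move=> xz yz; have zC : z \notin split_clique by apply: contraL yz; apply: split_y_clique_nbr.
have [j [/andP[j0 j1] jp [zo|[j' /and4P[j'0 j'1 j'j j'p]]]]] := split_clique_out_cases zC;
  last by rewrite (negbTE (split_x_multi_nbr j0 j1 jp j'0 j'1 j'j j'p)) in xz.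
move: xz yz; rewrite gm_switch_in_out ?split_x_in // gm_switch_out ?split_y_out //.
rewrite (nbrs_in_split_single j0 j1 jp zo) /= addbT.
exact: (split_single_common_nbr j0 j1 jp zo).
Qed.

Lemma split_switch_not_diamond_extensible : ~ diamond_extensible sw.
Proof.
have yC := split_y_out; have z1C := split_z1_out; have z2C := split_z2_out.
have xC := split_x_in; ord_neqs.
move=> ext; have [|||||||w [xw yw]] := ext split_x split_y split_z1 split_z2.
- by apply: (neq_coord (i := p0)); eval_coords.
- rewrite gm_switch_in_out // nbrs_in_split_y /= addbF.
  by apply: (sr_nadj3 (p := p0) (q := p2) (r := p3)) => //; eval_coords.
- rewrite gm_switch_in_out // nbrs_in_split_z1 /= addbT.
  by apply: (sr_nadj3 (p := p0) (q := p1) (r := p3)) => //; eval_coords.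
- rewrite gm_switch_out //.
  by apply: (sr_adjI (a := p1) (b := p2)) => //; eval_coords => i *; eval_coords.
- rewrite gm_switch_in_out // nbrs_in_split_z2 /= addbT.
  by apply: (sr_nadj3 (p := p0) (q := p1) (r := p2)) => //; eval_coords.
- rewrite gm_switch_out //.
  by apply: (sr_adjI (a := p1) (b := p3)) => //; eval_coords => i *; eval_coords.
- rewrite gm_switch_out //.
  by apply: (sr_adjI (a := p2) (b := p3)) => //; eval_coords => i *; eval_coords.
by case: (split_common_nbrs xw yw) => ->; rewrite eqxx.
Qed.

End SplitClique.

Theorem proposition14 (m n : nat) :
  (m = 4 /\ 3 <= n) \/ (n = 3 /\ 4 <= m) ->
  exists (T : finType) (e : rel T),
    simple_graph e /\ cospectral e (@sr_adj m n) /\ ~ graph_iso e (@sr_adj m n).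
Proof.
case=> [[-> n_ge3] | [-> m_gt3]].
- apply: (cospectral_mate_of_switching (C := unit_clique n)).
  + exact: sr_adj_sym.
  + exact: sr_adj_irr.
  + exact: card_unit_clique.
  + exact: unit_clique_clique.
  + exact: unit_clique_gm.
  + exact: sr_diamond_extensible.
  + exact: unit_switch_not_diamond_extensible.
- apply: (cospectral_mate_of_switching (C := split_clique m_gt3)).
  + exact: sr_adj_sym.
  + exact: sr_adj_irr.
  + exact: card_split_clique.
  + exact: split_clique_clique.
  + exact: split_clique_gm.
  + exact: sr_diamond_extensible.
  + exact: split_switch_not_diamond_extensible.
Qed.
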